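(* Let $\bm{Z}=(Z_1,\ldots,Z_n)^T\in\{0,1\}^n$ with both treatment groups nonempty, and let $\bm{X}\in\mathbb{R}^{n\times p}$ be a covariate matrix whose first column is the all-ones vector, with rows $\bm{X}_1,\ldots,\bm{X}_n$. Let $\sigma^2>0$, $\rho^2\ge 0$, let $\bm{S}$ be an $n\times n$ symmetric positive semidefinite matrix with orthonormal eigenvectors $\bm{v}_1,\ldots,\bm{v}_n$ (where $v_{ki}$ denotes the $i$-th entry of $\bm{v}_k$) and corresponding eigenvalues $\lambda_1\ge\cdots\ge\lambda_n\ge 0$, and set $\bm{\Sigma}=\sigma^2\bm{I}_n+\rho^2\bm{S}$. Assume $\bm{X}^T\bm{\Sigma}^{-1}\bm{X}$ is invertible and $\bm{Z}^T\bm{\Sigma}^{-1}(\bm{I}_n-\bm{X}(\bm{X}^T\bm{\Sigma}^{-1}\bm{X})^{-1}\bm{X}^T\bm{\Sigma}^{-1})\bm{Z}\neq 0$. Consider the quadratic program $$\min_{\bm{w}\in\mathbb{R}^n}\Big\{\sigma^2\sum_{i=1}^n w_i^2+\rho^2\sum_{k=1}^n\lambda_k\Big(\sum_{i:Z_i=1}w_iv_{ki}-\sum_{i:Z_i=0}w_iv_{ki}\Big)^2\Big\}$$ subject to $\sum_{i:Z_i=1}w_i=\sum_{i:Z_i=0}w_i=1$ and $\sum_{i:Z_i=1}w_i\bm{X}_i=\sum_{i:Z_i=0}w_i\bm{X}_i$. Then the solution of this problem is $$\bm{w}=\bm{M}\,\frac{(\bm{I}_n-\bm{\Sigma}^{-1}\bm{X}(\bm{X}^T\bm{\Sigma}^{-1}\bm{X})^{-1}\bm{X}^T)\bm{\Sigma}^{-1}\bm{Z}}{\bm{Z}^T\bm{\Sigma}^{-1}(\bm{I}_n-\bm{X}(\bm{X}^T\bm{\Sigma}^{-1}\bm{X})^{-1}\bm{X}^T\bm{\Sigma}^{-1})\bm{Z}},$$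 where $\bm{M}$ is diagonal with $M_{ii}=2Z_i-1$; i.e. it is the vector of implied weights of the GLS estimator $\hat\tau_{GLS}$ of the treatment coefficient.
   Context: The GLS estimator of $\tau$ in the model $\bm{Y}=\bm{X}\bm{\beta}+\tau\bm{Z}+\bm{\epsilon}$ with error covariance $\bm{\Sigma}$ is the last coordinate of $\big(\begin{pmatrix}\bm{X} & \bm{Z}\end{pmatrix}^T\bm{\Sigma}^{-1}\begin{pmatrix}\bm{X} & \bm{Z}\end{pmatrix}\big)^{-1}\begin{pmatrix}\bm{X} & \bm{Z}\end{pmatrix}^T\bm{\Sigma}^{-1}\bm{Y}$; its implied weights are the vector $\bm{w}$ above, in the sense that $\hat\tau_{GLS}=\sum_{Z_i=1}w_iY_i-\sum_{Z_i=0}w_iY_i$. *)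

From mathcomp Require Import all_boot all_order all_algebra.
Set Implicit Arguments. Unset Strict Implicit. Unset Printing Implicit Defensive.
Import Order.TTheory GRing.Theory Num.Theory.
Local Open Scope ring_scope.

(* Treatment indicator z : 'I_n -> bool (Z_i = 1 iff z i). *)

Definition Zvec (R : ringType) (n : nat) (z : 'I_n -> bool) : 'cV[R]_n :=
  \col_i (z i)%:R.

Definition Mdiag (R : ringType) (n : nat) (z : 'I_n -> bool) : 'M[R]_n :=
  \matrix_(i, j) (if i == j then 2 * (z i)%:R - 1 else 0).

Definition Sigma (R : ringType) (n : nat) (sigma2 rho2 : R) (S : 'M[R]_n) : 'M[R]_n :=
  sigma2%:M + rho2 *: S.

(* Objective: sigma^2 sum_i w_i^2
   + rho^2 sum_k lambda_k (sum_{Z_i=1} w_i v_ki - sum_{Z_i=0} w_i v_ki)^2,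
   where v_k is the k-th column of V, so v_ki = V i k. *)
Definition objective (R : ringType) (n : nat) (z : 'I_n -> bool)
    (sigma2 rho2 : R) (lam : 'I_n -> R) (V : 'M[R]_n) (w : 'cV[R]_n) : R :=
  sigma2 * \sum_i (w i 0) ^+ 2 +
  rho2 * \sum_k lam k *
     (\sum_(i | z i) w i 0 * V i k - \sum_(i | ~~ z i) w i 0 * V i k) ^+ 2.

Definition feasible (R : ringType) (n p : nat) (z : 'I_n -> bool)
    (X : 'M[R]_(n, p)) (w : 'cV[R]_n) : Prop :=
  [/\ \sum_(i | z i) w i 0 = 1, \sum_(i | ~~ z i) w i 0 = 1 &
      forall j : 'I_p, \sum_(i | z i) w i 0 * X i j = \sum_(i | ~~ z i) w i 0 * X i j].

Definition gls_denom (R : comUnitRingType) (n p : nat) (z : 'I_n -> bool)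
    (X : 'M[R]_(n, p)) (Sig : 'M[R]_n) : R :=
  let Si := invmx Sig in
  let Zc := Zvec R z in
  (Zc^T *m Si *m (1%:M - X *m invmx (X^T *m Si *m X) *m X^T *m Si) *m Zc) 0 0.

Definition gls_weights (R : fieldType) (n p : nat) (z : 'I_n -> bool)
    (X : 'M[R]_(n, p)) (Sig : 'M[R]_n) : 'cV[R]_n :=
  let Si := invmx Sig in
  (gls_denom z X Sig)^-1 *:
    (Mdiag R z *m ((1%:M - Si *m X *m invmx (X^T *m Si *m X) *m X^T) *m Si *m Zvec R z)).

From mathcomp Require Import all_boot all_order all_algebra ring.
Set Implicit Arguments. Unset Strict Implicit. Unset Printing Implicit Defensive.
Import Order.TTheory GRing.Theory Num.Theory.
Local Open Scope ring_scope.

(* Write u := M w.  Since M flips the signs of the control weights, the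
   constraints become Z^T u = 1 and X^T u = 0 (thanks to the intercept column,
   the normalisation of the control weights follows from the other two), and
   the spectral decomposition of S turns the objective into u^T Sigma u, a
   positive definite form.  The GLS contrast u0 is feasible and Sigma u0 lies in
   the span of Z and the columns of X, so u - u0 is Sigma-orthogonal to u0 for
   every feasible u.  Hence
     u^T Sigma u = u0^T Sigma u0 + (u - u0)^T Sigma (u - u0),
   which gives both minimality and uniqueness. *)

Definition qform (R : comPzRingType) n (A : 'M[R]_n) (u : 'cV[R]_n) : R :=
  (u^T *m A *m u) 0 0.

Section SignMatrix.
Variables (R : nzRingType) (n : nat) (z : 'I_n -> bool).

Lemma Mdiag_mulE (w : 'cV[R]_n) i :
  (Mdiag R z *m w) i 0 = if z i then w i 0 else - w i 0.
Proof.
rewrite mxE (bigD1 i) //= big1 => [|j /negbTE ji]; last by rewrite mxE eq_sym ji mul0r.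
by rewrite mxE eqxx addr0; case: (z i); rewrite ?mulr1 ?mulr0 ?addrK ?sub0r ?mul1r ?mulN1r.
Qed.

Lemma Mdiag_mulK (w : 'cV[R]_n) : Mdiag R z *m (Mdiag R z *m w) = w.
Proof. by apply/matrixP => i j; rewrite (ord1 j) !Mdiag_mulE; case: (z i); rewrite ?opprK. Qed.

Lemma sum_mul_Mdiag (w : 'cV[R]_n) (c : 'I_n -> R) :
  \sum_i (Mdiag R z *m w) i 0 * c i =
  \sum_(i | z i) w i 0 * c i - \sum_(i | ~~ z i) w i 0 * c i.
Proof.
rewrite (bigID z) /= -sumrN; congr (_ + _); apply: eq_bigr => i zi.
  by rewrite Mdiag_mulE zi.
by rewrite Mdiag_mulE (negbTE zi) mulNr.
Qed.

Lemma Zvec_tr_mul_Mdiag (w : 'cV[R]_n) :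
  ((Zvec R z)^T *m (Mdiag R z *m w)) 0 0 = \sum_(i | z i) w i 0.
Proof.
rewrite mxE (bigID z) /= [X in _ + X]big1 ?addr0 => [|i /negbTE zi].
  by apply: eq_bigr => i zi; rewrite Mdiag_mulE zi !mxE zi mul1r.
by rewrite !mxE zi mul0r.
Qed.

End SignMatrix.

Section QuadraticForm.
Variables (R : comNzRingType) (n : nat).
Implicit Types (A S V : 'M[R]_n) (u : 'cV[R]_n).

Lemma qformD_orth A u h :
  A^T = A -> (h^T *m A *m u) 0 0 = 0 -> qform A (u + h) = qform A u + qform A h.
Proof.
move=> A_sym hAu; have uAh : (u^T *m A *m h) 0 0 = 0.
  have tr_hAu : (h^T *m A *m u)^T = u^T *m A *m h.
    by rewrite !trmx_mul trmxK A_sym mulmxA.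
  by rewrite -hAu -tr_hAu mxE.
rewrite /qform [(u + h)^T]raddfD /= !mulmxDl !mulmxDr ![(_ + _ : 'M_1) 0 0]mxE.
by rewrite uAh hAu addr0 add0r.
Qed.

Lemma qform1 u : qform 1%:M u = \sum_i u i 0 ^+ 2.
Proof. by rewrite /qform mulmx1 mxE; apply: eq_bigr => i _; rewrite mxE. Qed.

Lemma qform_Sigma sigma2 rho2 S u :
  qform (Sigma sigma2 rho2 S) u = sigma2 * qform 1%:M u + rho2 * qform S u.
Proof.
rewrite /qform /Sigma mulmxDr mulmxDl -scalemxAr -scalemxAl mulmx1 mul_mx_scalar.
by rewrite -scalemxAl [(_ + _ : 'M_1) 0 0]mxE ![(_ *: _ : 'M_1) 0 0]mxE.
Qed.

Lemma Sigma_sym sigma2 rho2 S : S^T = S -> (Sigma sigma2 rho2 S)^T = Sigma sigma2 rho2 S.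
Proof. by move=> S_sym; rewrite /Sigma raddfD /= linearZ /= tr_scalar_mx S_sym. Qed.

Lemma qform_eigenbasis S V (lam : 'I_n -> R) u :
  V^T *m V = 1%:M -> (forall k, S *m col k V = lam k *: col k V) ->
  qform S u = \sum_k lam k * (V^T *m u) k 0 ^+ 2.
Proof.
move=> V_orth V_eig.
have SV : S *m V = V *m diag_mx (\row_k lam k).
  apply/matrixP => i k; rewrite mul_mx_diag !mxE mulrC.
  have := congr1 (fun M : 'cV_n => M i 0) (V_eig k); rewrite !mxE => <-.
  by apply: eq_bigr => j _; rewrite !mxE.
have -> : qform S u = qform (diag_mx (\row_k lam k)) (V^T *m u).
  by rewrite /qform -[S]mulmx1 -(mulmx1C V_orth) (mulmxA S) SV trmx_mul trmxK !mulmxA.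
rewrite /qform mul_mx_diag mxE; apply: eq_bigr => k _.
by rewrite !mxE; ring.
Qed.

End QuadraticForm.

Section Definiteness.
Variables (R : realFieldType) (n : nat).
Implicit Types (A S V : 'M[R]_n) (u : 'cV[R]_n).

Lemma qform1_ge0 u : 0 <= qform 1%:M u.
Proof. by rewrite qform1; apply: sumr_ge0 => i _; apply: sqr_ge0. Qed.

Lemma qform1_eq0 u : qform 1%:M u = 0 -> u = 0.
Proof.
rewrite qform1 => /psumr_eq0P u0; apply/matrixP => i j; rewrite (ord1 j) mxE.
by apply/eqP; rewrite -sqrf_eq0 u0 // => k _; apply: sqr_ge0.
Qed.

Lemma qform_eigenbasis_ge0 S V (lam : 'I_n -> R) u :
  V^T *m V = 1%:M -> (forall k, S *m col k V = lam k *: col k V) ->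
  (forall k, 0 <= lam k) -> 0 <= qform S u.
Proof.
move=> V_orth V_eig lam_ge0; rewrite (qform_eigenbasis _ V_orth V_eig).
by apply: sumr_ge0 => k _; rewrite mulr_ge0 ?sqr_ge0.
Qed.

Lemma Sigma_definite sigma2 rho2 S u :
  0 < sigma2 -> 0 <= rho2 -> 0 <= qform S u ->
  qform (Sigma sigma2 rho2 S) u <= 0 -> u = 0.
Proof.
move=> sigma2_gt0 rho2_ge0 S_u; rewrite qform_Sigma => le0.
apply: qform1_eq0; apply/eqP; rewrite eq_le qform1_ge0 andbT.
rewrite -(pmulr_rle0 _ sigma2_gt0); apply: le_trans le0.
by rewrite lerDl mulr_ge0.
Qed.

Section DefiniteForm.
Variable A : 'M[R]_n.
Hypothesis A_definite : forall u, qform A u <= 0 -> u = 0.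

Lemma qform_ge0 u : 0 <= qform A u.
Proof.
case: (lerP (qform A u) 0) => [/A_definite u0|/ltW //].
by rewrite u0 /qform mulmx0 mxE.
Qed.

Lemma unitmx_definite : A \in unitmx.
Proof.
rewrite unitmxE unitfE; apply/det0P => -[v v_neq0 vA].
have : v^T = 0 by apply: A_definite; rewrite /qform trmxK vA mul0mx mxE.
by move/(congr1 trmx); rewrite trmxK trmx0 => v0; rewrite v0 eqxx in v_neq0.
Qed.

End DefiniteForm.

End Definiteness.

Section SignedWeights.
Variables (R : comNzRingType) (n : nat) (z : 'I_n -> bool).

Lemma objectiveE sigma2 rho2 (S V : 'M[R]_n) (lam : 'I_n -> R) (w : 'cV[R]_n) :
  V^T *m V = 1%:M -> (forall k, S *m col k V = lam k *: col k V) ->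
  objective z sigma2 rho2 lam V w = qform (Sigma sigma2 rho2 S) (Mdiag R z *m w).
Proof.
move=> V_orth V_eig; rewrite qform_Sigma (qform_eigenbasis _ V_orth V_eig) qform1.
congr (sigma2 * _ + rho2 * _); apply: eq_bigr => i _.
  by rewrite Mdiag_mulE; case: (z i); rewrite ?sqrrN.
rewrite -sum_mul_Mdiag mxE; congr (_ * _ ^+ 2).
by apply: eq_bigr => j _; rewrite [V^T _ _]mxE mulrC.
Qed.

Lemma feasibleE p (X : 'M[R]_(n, p.+1)) (w : 'cV[R]_n) :
  (forall i, X i ord0 = 1) ->
  feasible z X w <->
  ((Zvec R z)^T *m (Mdiag R z *m w)) 0 0 = 1 /\ X^T *m (Mdiag R z *m w) = 0.
Proof.
move=> X1; rewrite Zvec_tr_mul_Mdiag.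
have XtE j : (X^T *m (Mdiag R z *m w)) j 0 =
    \sum_(i | z i) w i 0 * X i j - \sum_(i | ~~ z i) w i 0 * X i j.
  by rewrite -sum_mul_Mdiag mxE; apply: eq_bigr => i _; rewrite [X^T _ _]mxE mulrC.
split=> [[w1 _ wX]|[w1 Xw]].
  by split=> //; apply/matrixP => j k; rewrite (ord1 k) XtE wX subrr mxE.
have balanced j : \sum_(i | z i) w i 0 * X i j = \sum_(i | ~~ z i) w i 0 * X i j.
  by apply/eqP; rewrite -subr_eq0 -XtE Xw mxE.
have sum_intercept (P : pred 'I_n) :
    \sum_(i | P i) w i 0 * X i ord0 = \sum_(i | P i) w i 0.
  by apply: eq_bigr => i _; rewrite X1 mulr1.
by split=> //; rewrite -w1 -(sum_intercept z) -(sum_intercept (fun i => ~~ z i)) balanced.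
Qed.

End SignedWeights.

Section GLSContrast.
Variables (R : fieldType) (n p : nat) (z : 'I_n -> bool).
Variables (X : 'M[R]_(n, p)) (Sig : 'M[R]_n).
Local Notation Si := (invmx Sig).
Local Notation G := (invmx (X^T *m invmx Sig *m X)).
Local Notation Zc := (Zvec R z).

(* The GLS estimator of tau is gls_contrast^T Y. *)
Definition gls_contrast : 'cV[R]_n :=
  (gls_denom z X Sig)^-1 *: ((1%:M - Si *m X *m G *m X^T) *m Si *m Zc).

Lemma gls_weightsE : gls_weights z X Sig = Mdiag R z *m gls_contrast.
Proof. by rewrite /gls_weights scalemxAr. Qed.

Hypotheses (Sig_sym : Sig^T = Sig) (Sig_unit : Sig \in unitmx).
Hypotheses (XSX_unit : X^T *m Si *m X \in unitmx) (denom_neq0 : gls_denom z X Sig != 0).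

Lemma trmx_mul_gls_contrast : X^T *m gls_contrast = 0.
Proof.
rewrite -scalemxAr !mulmxA mulmxBr mulmx1 !mulmxBl !mulmxA (mulmxV XSX_unit).
by rewrite mul1mx subrr scaler0.
Qed.

Lemma Zvec_tr_mul_gls_contrast : (Zc^T *m gls_contrast) 0 0 = 1.
Proof.
have := denom_neq0; rewrite -scalemxAr mxE /gls_denom /=.
by rewrite !mulmxBl !mulmxBr !mul1mx !mulmx1 !mulmxBl !mulmxA; apply: mulVf.
Qed.

Lemma gls_contrast_orth (h : 'cV[R]_n) :
  X^T *m h = 0 -> (Zc^T *m h) 0 0 = 0 -> (h^T *m Sig *m gls_contrast) 0 0 = 0.
Proof.
move=> Xh Zh.
have hX : h^T *m X = 0 by rewrite -[X]trmxK -trmx_mul Xh trmx0.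
have hZ : (h^T *m Zc) 0 0 = 0.
  by rewrite -Zh -[in RHS](trmxK h) -trmx_mul [RHS]mxE.
have Sig_contrast : Sig *m ((1%:M - Si *m X *m G *m X^T) *m Si *m Zc) =
                    Zc - X *m G *m X^T *m Si *m Zc.
  by rewrite !mulmxA mulmxBr mulmx1 !mulmxBl !mulmxA (mulmxV Sig_unit) !mul1mx.
rewrite -scalemxAr -[h^T *m Sig *m _]mulmxA Sig_contrast mulmxBr !mulmxA hX.
by rewrite !mul0mx subr0 [(_ *: _ : 'M_1) 0 0]mxE hZ mulr0.
Qed.

Lemma qform_gls_contrast (u : 'cV[R]_n) :
  X^T *m u = 0 -> (Zc^T *m u) 0 0 = 1 ->
  qform Sig u = qform Sig gls_contrast + qform Sig (u - gls_contrast).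
Proof.
move=> Xu Zu; rewrite -{1}[u](subrK gls_contrast) addrC qformD_orth //.
apply: gls_contrast_orth.
  by rewrite mulmxBr Xu trmx_mul_gls_contrast subrr.
rewrite mulmxBr [(_ - _ : 'M_1) 0 0]mxE [(- _ : 'M_1) 0 0]mxE Zu.
by rewrite Zvec_tr_mul_gls_contrast subrr.
Qed.

End GLSContrast.

Theorem proposition2 (R : realFieldType) (n p : nat)
    (z : 'I_n -> bool) (X : 'M[R]_(n, p.+1))
    (sigma2 rho2 : R) (S V : 'M[R]_n) (lam : 'I_n -> R) :
  (exists i, z i) -> (exists i, ~~ z i) ->
  (forall i, X i ord0 = 1) ->
  0 < sigma2 -> 0 <= rho2 ->
  S^T = S ->
  V^T *m V = 1%:M ->
  (forall k, S *m col k V = lam k *: col k V) ->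
  (forall k l : 'I_n, (k <= l)%N -> lam l <= lam k) ->
  (forall k, 0 <= lam k) ->
  (X^T *m invmx (Sigma sigma2 rho2 S) *m X) \in unitmx ->
  gls_denom z X (Sigma sigma2 rho2 S) != 0 ->
  let w0 := gls_weights z X (Sigma sigma2 rho2 S) in
  [/\ feasible z X w0,
      forall w, feasible z X w ->
        objective z sigma2 rho2 lam V w0 <= objective z sigma2 rho2 lam V w
    & forall w, feasible z X w ->
        objective z sigma2 rho2 lam V w = objective z sigma2 rho2 lam V w0 -> w = w0].
Proof.
move=> _ _ X1 sigma2_gt0 rho2_ge0 S_sym V_orth V_eig _ lam_ge0 XSX_unit denom_neq0 w0.
have Sig_definite (u : 'cV[R]_n) : qform (Sigma sigma2 rho2 S) u <= 0 -> u = 0.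
  by apply: Sigma_definite => //; apply: qform_eigenbasis_ge0 V_orth V_eig lam_ge0.
have Sig_sym := Sigma_sym sigma2 rho2 S_sym.
have Sig_unit := unitmx_definite Sig_definite.
pose u0 := gls_contrast z X (Sigma sigma2 rho2 S).
have w0E : w0 = Mdiag R z *m u0 by rewrite /w0 gls_weightsE.
have objective_decomp w : feasible z X w ->
    objective z sigma2 rho2 lam V w =
    objective z sigma2 rho2 lam V w0 + qform (Sigma sigma2 rho2 S) (Mdiag R z *m w - u0).
  move=> /(feasibleE _ _ X1) [Zw Xw].
  rewrite !(objectiveE _ _ _ _ V_orth V_eig) w0E Mdiag_mulK.
  exact: qform_gls_contrast Sig_sym Sig_unit XSX_unit denom_neq0 _ Xw Zw.
split.
- apply/(feasibleE _ _ X1); rewrite w0E Mdiag_mulK.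
  split; [exact: Zvec_tr_mul_gls_contrast | exact: trmx_mul_gls_contrast].
- by move=> w /objective_decomp ->; rewrite lerDl qform_ge0.
- move=> w /objective_decomp -> /eqP; rewrite -subr_eq0 addrC addKr => /eqP q0.
  have /eqP : Mdiag R z *m w - u0 = 0 by apply: Sig_definite; rewrite q0.
  by rewrite subr_eq0 => /eqP Mw; rewrite w0E -Mw Mdiag_mulK.
Qed.
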